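(* Let $\tau=t^{1/2}$ and $[2]_t=t^{1/2}+t^{-1/2}$. The infinite product $$\prod_{n\geq1}\frac{1}{(1+t^{-\frac12}qu^n)(1+t^{\frac12}q^{-1}u^n)(1+t^{\frac12}qu^n)(1+t^{-\frac12}q^{-1}u^n)(1-u^n)^{18}(1-tu^n)(1-t^{-1}u^n)}$$ can be written as $$\sum_{h=0}^\infty\sum_{g=0}^h n^h_g(t)\,\big(q^{-1}+[2]_t+q\big)^g u^h,$$ where each $n^h_g(t)\in\mathbb Q[\tau^{\pm1}]$ is a Laurent polynomial in $\tau$ invariant under $\tau\mapsto\tau^{-1}$.
   Context: The product is expanded as a formal power series in $u$ whose coefficients are Laurent polynomials in $q$ and $\tau=t^{1/2}$. *)

From HB Require Import structures.
From mathcomp Require Import all_boot all_order all_algebra fraction.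
Set Implicit Arguments. Unset Strict Implicit. Unset Printing Implicit Defensive.
Import Order.TTheory GRing.Theory Num.Theory.
Local Open Scope ring_scope.

(* Coefficient field: rational functions Q(tau, q), containing the
   Laurent polynomial ring Q[tau^{+-1}, q^{+-1}].  Inner variable = tau,
   outer variable = q. *)
Definition R2 : idomainType := {poly {poly rat}}.
Definition K : fieldType := {fraction R2}.

Definition tau : K := tofrac ((('X : {poly rat})%:P) : R2).
Definition qv : K := tofrac ('X : R2).
Definition tt : K := tau ^+ 2.

(* Formal power series in u over K, as coefficient sequences. *)
Definition fps := nat -> K.
Definition fps_one : fps := fun m => (m == 0)%:R.
Definition fps_mul (a b : fps) : fps :=
  fun m => \sum_(i < m.+1) a i * b (m - i)%N.
Definition fps_prod (s : seq fps) : fps := foldr fps_mul fps_one s.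

(* geom c n = 1 / (1 - c u^n) = sum_k c^k u^(n k), for n >= 1. *)
Definition geom (c : K) (n : nat) : fps :=
  fun m => if (n %| m)%N then c ^+ (m %/ n) else 0.

Definition factor (n : nat) : seq fps :=
  [:: geom (- (tau^-1 * qv)) n; geom (- (tau * qv^-1)) n;
      geom (- (tau * qv)) n; geom (- (tau^-1 * qv^-1)) n]
  ++ nseq 18 (geom 1 n) ++ [:: geom tt n; geom tt^-1 n].

(* Coefficient of u^h in the infinite product over n >= 1: factors with
   n > h are congruent to 1 mod u^(h+1), so it equals the coefficient of
   u^h in the finite product over 1 <= n <= h. *)
Definition prod_coef (h : nat) : K :=
  fps_prod (flatten [seq factor n | n <- iota 1 h]) h.

(* Laurent polynomials in tau over Q: (p, k) represents tau^{-k} p(tau). *)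
Definition laurent := ({poly rat} * nat)%type.
Definition leval (l : laurent) (x : K) : K :=
  x ^- l.2 * (map_poly ratr l.1).[x].
Definition lsym (l : laurent) : Prop := leval l tau = leval l tau^-1.

(* The reciprocal of the product is prod_(n >= 1) D(u^n), where D is a polynomial
   whose 24 roots come in pairs c, c^-1 (grouping the four q-factors together).
   Hence D is a product of palindromic polynomials, and the coefficient of u^m
   in D is a polynomial of degree at most m in y = q^-1 + [2]_t + q with
   coefficients in Q[[2]_t].  This degree condition on the coefficients of u^m
   is stable under products and under inversion of series with constant term 1,
   by the recursive formula for the inverse.  Finally a polynomial in
   [2]_t = tau + tau^-1 is a Laurent polynomial in tau invariant under
   tau -> tau^-1. *)

From HB Require Import structures.
From mathcomp Require Import all_boot all_order all_algebra fraction.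
From mathcomp Require Import ring zify.
Import Order.TTheory GRing.Theory Num.Theory.
Set Implicit Arguments.
Unset Strict Implicit.
Unset Printing Implicit Defensive.
Local Open Scope ring_scope.

Definition inK : {rmorphism rat -> K} :=
  (@tofrac R2) \o (@polyC {poly rat}) \o (@polyC rat).

Definition br2 : K := tau + tau^-1.
Definition yv : K := qv^-1 + br2 + qv.

Lemma tau_neq0 : tau != 0.
Proof. by rewrite tofrac_eq0 polyC_eq0 polyX_eq0. Qed.

Lemma qv_neq0 : qv != 0.
Proof. by rewrite tofrac_eq0 polyX_eq0. Qed.

Lemma levalE (l : laurent) (x : K) : leval l x = x ^- l.2 * (map_poly inK l.1).[x].
Proof. by rewrite /leval (eq_map_poly (fmorph_eq_rat inK)). Qed.

(* Horner's scheme: the step (r, k) |-> (r (X^2 + 1) + c X^(k+1), k + 1) turns a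
   representative of a(tau + tau^-1) into one of a(tau + tau^-1) (tau + tau^-1) + c. *)
Definition laurent_of_br2 (p : {poly rat}) : laurent :=
  foldr (fun (c : rat) (l : laurent) => (l.1 * ('X^2 + 1) + c *: 'X^(l.2.+1), l.2.+1))
    (0, 0%N) p.

Lemma horner_laurent_of_br2 (F : fieldType) (f : {rmorphism rat -> F})
    (p : {poly rat}) (x : F) : x != 0 ->
  x ^- (laurent_of_br2 p).2 * (map_poly f (laurent_of_br2 p).1).[x] =
  (map_poly f p).[x + x^-1].
Proof.
move=> x0; rewrite -[in RHS](polyseqK p) /laurent_of_br2.
elim: (polyseq p) => [|c s IH] /=; first by rewrite !rmorph0 !horner0 mulr0.
move: IH; case: foldr => r k /= IH; rewrite cons_poly_def.
rewrite !(rmorphD, rmorphM, rmorph1) /= map_polyX map_polyC map_polyZ map_polyXn.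
rewrite !(hornerD, hornerM, hornerZ, hornerX, hornerC, hornerXn) -IH.
have xk0 : x ^+ k != 0 by rewrite expf_neq0.
rewrite exprS; field; by rewrite x0 xk0.
Qed.

Lemma leval_laurent_of_br2 (p : {poly rat}) (x : K) : x != 0 ->
  leval (laurent_of_br2 p) x = (map_poly inK p).[x + x^-1].
Proof. by move=> x0; rewrite levalE horner_laurent_of_br2. Qed.

Lemma lsym_laurent_of_br2 (p : {poly rat}) : lsym (laurent_of_br2 p).
Proof.
rewrite /lsym !leval_laurent_of_br2 ?invr_eq0 ?tau_neq0 //.
by rewrite invrK addrC.
Qed.

Definition sym_eval : {rmorphism {poly rat} -> K} :=
  horner_eval br2 \o map_poly inK.

Lemma sym_evalE (p : {poly rat}) : sym_eval p = (map_poly inK p).[br2].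
Proof. by []. Qed.

Lemma sym_eval_laurent (p : {poly rat}) :
  sym_eval p = leval (laurent_of_br2 p) tau.
Proof. by rewrite leval_laurent_of_br2 ?tau_neq0. Qed.

Definition yeval : {rmorphism {poly {poly rat}} -> K} :=
  horner_eval yv \o map_poly sym_eval.

Lemma yevalE (P : {poly {poly rat}}) : yeval P = (map_poly sym_eval P).[yv].
Proof. by []. Qed.

Definition ydeg_le (m : nat) (x : K) :=
  exists2 P : {poly {poly rat}}, (size P <= m.+1)%N & x = yeval P.

Lemma ydeg_leW m n x : (m <= n)%N -> ydeg_le m x -> ydeg_le n x.
Proof. by move=> le_mn [P sP ->]; exists P => //; lia. Qed.

Lemma ydeg_le_sym (p : {poly rat}) : ydeg_le 0 (sym_eval p).
Proof.
exists p%:P; first exact: size_polyC_leq1.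
by rewrite yevalE map_polyC hornerC.
Qed.

Lemma ydeg_le_nat m n : ydeg_le m n%:R.
Proof. by apply: (ydeg_leW (leq0n m)); rewrite -(rmorph_nat sym_eval); apply: ydeg_le_sym. Qed.

Lemma ydeg_le_br2 : ydeg_le 0 br2.
Proof. by have := ydeg_le_sym 'X; rewrite sym_evalE map_polyX hornerX. Qed.

Lemma ydeg_le_yv : ydeg_le 1 yv.
Proof. by exists 'X; rewrite ?size_polyX // yevalE map_polyX hornerX. Qed.

Lemma ydeg_leD m x z : ydeg_le m x -> ydeg_le m z -> ydeg_le m (x + z).
Proof.
move=> [P sP ->] [Q sQ ->]; exists (P + Q); last by rewrite rmorphD.
by apply: leq_trans (size_add _ _) _; rewrite geq_max sP.
Qed.

Lemma ydeg_leN m x : ydeg_le m x -> ydeg_le m (- x).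
Proof. by move=> [P sP ->]; exists (- P); rewrite ?size_opp ?rmorphN. Qed.

Lemma ydeg_leB m x z : ydeg_le m x -> ydeg_le m z -> ydeg_le m (x - z).
Proof. by move=> hx hz; apply: ydeg_leD hx (ydeg_leN hz). Qed.

Lemma ydeg_leM m n x z : ydeg_le m x -> ydeg_le n z -> ydeg_le (m + n) (x * z).
Proof.
move=> [P sP ->] [Q sQ ->]; exists (P * Q); last by rewrite rmorphM.
by apply: leq_trans (size_polyMleq _ _) _; lia.
Qed.

Lemma ydeg_le_sum m I (r : seq I) (P : pred I) (F : I -> K) :
  (forall i, P i -> ydeg_le m (F i)) -> ydeg_le m (\sum_(i <- r | P i) F i).
Proof. by move=> hF; apply: big_ind => //; [exact: (ydeg_le_nat m 0) | apply: ydeg_leD]. Qed.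

Lemma ydeg_le_qsym : ydeg_le 1 (qv + qv^-1).
Proof.
have -> : qv + qv^-1 = yv - br2 by rewrite /yv; ring.
exact: ydeg_leB ydeg_le_yv (ydeg_leW (leq0n 1) ydeg_le_br2).
Qed.

Definition eqmodX (N : nat) (p r : {poly K}) := forall m, (m <= N)%N -> p`_m = r`_m.

Lemma eqmodXM N p p' r r' :
  eqmodX N p p' -> eqmodX N r r' -> eqmodX N (p * r) (p' * r').
Proof.
move=> hp hr m hm; rewrite !coefM; apply: eq_bigr => i _.
have lt_im := ltn_ord i.
by rewrite hp ?hr //; lia.
Qed.

Lemma eqmodX_prod1 N I (r : seq I) (P : pred I) (F : I -> {poly K}) :
  (forall i, P i -> eqmodX N (F i) 1) -> eqmodX N (\prod_(i <- r | P i) F i) 1.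
Proof.
move=> hF; apply: (big_ind (fun p => eqmodX N p 1)) => // p p' hp hp'.
by rewrite -(mulr1 1); apply: eqmodXM.
Qed.

Definition graded (N : nat) (p : {poly K}) := forall m, (m <= N)%N -> ydeg_le m p`_m.

Section Graded.
Variable N : nat.

Lemma graded_scaleXn (k : nat) (c : K) : ydeg_le k c -> graded N (c *: 'X^k).
Proof.
move=> hc m _; rewrite coefZ coefXn; case: eqP => [-> | _].
  by rewrite mulr1.
by rewrite mulr0; exact: (ydeg_le_nat m 0).
Qed.

Lemma graded_Xn (k : nat) : graded N 'X^k.
Proof. by rewrite -[_ ^+ _]scale1r; apply: graded_scaleXn; exact: (ydeg_le_nat k 1). Qed.

Lemma graded1 : graded N 1.
Proof. by rewrite -(expr0 'X); apply: graded_Xn. Qed.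

Lemma gradedD p r : graded N p -> graded N r -> graded N (p + r).
Proof. by move=> hp hr m hm; rewrite coefD; apply: ydeg_leD; [apply: hp | apply: hr]. Qed.

Lemma gradedB p r : graded N p -> graded N r -> graded N (p - r).
Proof. by move=> hp hr m hm; rewrite coefB; apply: ydeg_leB; [apply: hp | apply: hr]. Qed.

Lemma gradedM p r : graded N p -> graded N r -> graded N (p * r).
Proof.
move=> hp hr m hm; rewrite coefM; apply: ydeg_le_sum => i _.
have le_im := ltn_ord i.
apply: (@ydeg_leW (i + (m - i))); first lia.
by apply: ydeg_leM; [apply: hp | apply: hr]; lia.
Qed.

Lemma graded_prod I (r : seq I) (P : pred I) (F : I -> {poly K}) :
  (forall i, P i -> graded N (F i)) -> graded N (\prod_(i <- r | P i) F i).
Proof. by move=> hF; apply: big_ind => //; [apply: graded1 | apply: gradedM]. Qed.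

Lemma gradedX p k : graded N p -> graded N (p ^+ k).
Proof. by move=> hp; elim: k => [|k IH]; [apply: graded1 | rewrite exprS; apply: gradedM]. Qed.

Lemma graded_comp_Xn p n : (0 < n)%N -> graded N p -> graded N (p \Po 'X^n).
Proof.
move=> n_gt0 hp m hm; rewrite coef_comp_poly_Xn //.
case: ifP => [/dvdnP [k def_m] | _]; last exact: (ydeg_le_nat m 0).
rewrite def_m mulnK //; apply: (@ydeg_leW k); [nia | apply: hp; nia].
Qed.

Lemma graded_inv F D : graded N D -> D`_0 = 1 -> eqmodX N (F * D) 1 -> graded N F.
Proof.
move=> hD D0 hFD; elim/ltn_ind => m IH hm.
have := hFD m hm; rewrite coef1 coefM big_ord_recr /= subnn D0 mulr1.
move/(canRL (addKr _)) ->; apply: ydeg_leD; last exact: ydeg_le_nat.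
apply/ydeg_leN/ydeg_le_sum => i _; have lt_im := ltn_ord i.
apply: (@ydeg_leW (i + (m - i))); first lia.
by apply: ydeg_leM; [apply: IH | apply: hD]; lia.
Qed.

End Graded.

Definition palin2 (R : nzRingType) (s : R) : {poly R} := 1 - s *: 'X + 'X^2.
Definition palin4 (R : nzRingType) (e f : R) : {poly R} :=
  1 - e *: 'X + f *: 'X^2 - e *: 'X^3 + 'X^4.

Lemma palin2_pair (F : fieldType) (c : F) : c != 0 ->
  (1 - c *: 'X) * (1 - c^-1 *: 'X) = palin2 (c + c^-1).
Proof.
move=> c0; have cc : c%:P * c^-1%:P = 1 :> {poly F} by rewrite -polyCM mulfV.
by rewrite /palin2 -!mul_polyC rmorphD; ring: cc.
Qed.

Lemma palin2M (R : comNzRingType) (a b : R) :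
  palin2 a * palin2 b = palin4 (a + b) (a * b + 2).
Proof. by rewrite /palin2 /palin4 -!mul_polyC !(rmorphD, rmorphM, rmorph1); ring. Qed.

Lemma graded_palin2 N s : ydeg_le 1 s -> graded N (palin2 s).
Proof.
move=> hs; apply: gradedD; last exact: graded_Xn.
by apply: gradedB; [apply: graded1 | apply: (@graded_scaleXn N 1)].
Qed.

Lemma graded_palin4 N e f : ydeg_le 1 e -> ydeg_le 2 f -> graded N (palin4 e f).
Proof.
move=> he hf; apply: gradedD; last exact: graded_Xn.
apply: gradedB; last by apply: graded_scaleXn; apply: (ydeg_leW _ he).
apply: gradedD; last exact: graded_scaleXn.
by apply: gradedB; [apply: graded1 | apply: (@graded_scaleXn N 1)].
Qed.

Lemma prod_pair_ones (R : comNzRingType) (k : nat) :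
  \prod_(c <- nseq k.*2 (1 : R)) (1 - c *: 'X) = palin2 2 ^+ k.
Proof.
rewrite big_nseq iter_mulr_1 scale1r -mul2n exprM.
by congr (_ ^+ _); rewrite /palin2 scaler_nat; ring.
Qed.

Section Denominator.
Variables (F : fieldType) (t q : F).
Hypotheses (t0 : t != 0) (q0 : q != 0).

Definition denom_consts : seq F :=
  [:: - (t^-1 * q); - (t * q^-1); - (t * q); - (t^-1 * q^-1)]
  ++ nseq 18 1 ++ [:: t ^+ 2; (t ^+ 2)^-1].

Lemma prod_qfactors :
  \prod_(c <- [:: - (t^-1 * q); - (t * q^-1); - (t * q); - (t^-1 * q^-1)])
     (1 - c *: 'X)
  = palin4 (- ((t + t^-1) * (q + q^-1))) ((q + q^-1) ^+ 2 + (t + t^-1) ^+ 2 - 2).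
Proof.
have c1 : - (t^-1 * q) != 0 by rewrite oppr_eq0 mulf_neq0 ?invr_eq0.
have c2 : - (t * q) != 0 by rewrite oppr_eq0 mulf_neq0.
have -> : - (t * q^-1) = (- (t^-1 * q))^-1 by rewrite invrN invfM invrK.
have -> : - (t^-1 * q^-1) = (- (t * q))^-1 by rewrite invrN invfM.
rewrite !big_cons big_nil mulr1 mulrA (palin2_pair c1) (palin2_pair c2) palin2M.
by congr palin4; field; rewrite c2 oppr_eq0 q0 t0.
Qed.

Lemma prod_tfactors :
  \prod_(c <- [:: t ^+ 2; (t ^+ 2)^-1]) (1 - c *: 'X) = palin2 ((t + t^-1) ^+ 2 - 2).
Proof.
rewrite !big_cons big_nil mulr1 palin2_pair ?expf_neq0 //.
by congr palin2; field.
Qed.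

Lemma prod_denom_consts : \prod_(c <- denom_consts) (1 - c *: 'X) =
  palin4 (- ((t + t^-1) * (q + q^-1))) ((q + q^-1) ^+ 2 + (t + t^-1) ^+ 2 - 2)
  * palin2 2 ^+ 9 * palin2 ((t + t^-1) ^+ 2 - 2).
Proof.
rewrite !big_cat prod_qfactors (prod_pair_ones _ 9) prod_tfactors.
by rewrite /= mulrA.
Qed.

End Denominator.

Lemma factorE n : factor n = [seq geom c n | c <- denom_consts tau qv].
Proof. by []. Qed.

Definition denom : {poly K} := \prod_(c <- denom_consts tau qv) (1 - c *: 'X).

Lemma graded_denom N : graded N denom.
Proof.
rewrite /denom (prod_denom_consts tau_neq0 qv_neq0) -/br2.
have hq := ydeg_le_qsym; have hb := ydeg_le_br2.
apply: gradedM; first apply: gradedM.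
- apply: graded_palin4; first by apply/ydeg_leN/(ydeg_leM hb hq).
  apply: ydeg_leB; last exact: ydeg_le_nat.
  by apply: ydeg_leD; [rewrite expr2; apply: (ydeg_leM hq hq) |
                       apply: (ydeg_leW _ (ydeg_leM hb hb))].
- by apply/gradedX/graded_palin2/ydeg_le_nat.
- apply/graded_palin2/ydeg_leB; last exact: ydeg_le_nat.
  by apply: (ydeg_leW _ (ydeg_leM hb hb)).
Qed.

Definition trunc (N : nat) (a : fps) : {poly K} := \poly_(i < N.+1) a i.

Lemma fps_prod_coef N (s : seq fps) m : (m <= N)%N ->
  fps_prod s m = (\prod_(a <- s) trunc N a)`_m.
Proof.
elim: s m => [|a s IH] m hm; first by rewrite big_nil coef1.
rewrite big_cons coefM /= /fps_mul; apply: eq_bigr => i _.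
have lt_im := ltn_ord i.
by rewrite coef_poly IH; [rewrite ifT //; lia | lia].
Qed.

Lemma eqmodX_geom N c n : (0 < n)%N ->
  eqmodX N (trunc N (geom c n) * ((1 - c *: 'X) \Po 'X^n)) 1.
Proof.
move=> n_gt0 m hm.
rewrite comp_polyB rmorph1 comp_polyZ comp_polyX mulrBr mulr1 -scalerAr.
rewrite coefB coefZ coefMXn !coef_poly coef1 ifT; last lia.
rewrite /geom; case: (ltnP m n) => [lt_mn | le_nm].
  case: (posnP m) => [-> | m_gt0]; first by rewrite dvdn0 div0n expr0 mulr0 subr0.
  by rewrite (gtnNdvd m_gt0 lt_mn) mulr0 subr0.
have -> : (m - n < N.+1)%N by lia.
rewrite (gtn_eqF (leq_trans n_gt0 le_nm)) -{1 2}(subnK le_nm) dvdn_addl //.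
case: ifP => [dvd_n | _]; last by rewrite mulr0 subr0.
by rewrite divnDl // divnn n_gt0 /= addn1 exprS subrr.
Qed.

Lemma prod_coef_ydeg_le h : ydeg_le h (prod_coef h).
Proof.
set F := \prod_(a <- flatten [seq factor n | n <- iota 1 h]) trunc h a.
set D := \prod_(n <- iota 1 h) (denom \Po 'X^n).
have gD : graded h D.
  rewrite /D big_seq; apply: graded_prod => n; rewrite mem_iota => /andP [n_gt0 _].
  exact: graded_comp_Xn n_gt0 (@graded_denom h).
have D0 : D`_0 = 1.
  rewrite /D big_seq coef0_prod; apply: big1 => n; rewrite mem_iota => /andP [n_gt0 _].
  rewrite coef_comp_poly_Xn // dvdn0 div0n /denom coef0_prod big1 // => c _.
  by rewrite coefB coefZ coefX coef1 mulr0 subr0.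
have FD : eqmodX h (F * D) 1.
  rewrite /F /D big_flatten big_map -big_split big_seq; apply: eqmodX_prod1 => n.
  rewrite mem_iota => /andP [n_gt0 _].
  rewrite factorE big_map /denom rmorph_prod -big_split; apply: eqmodX_prod1 => c _.
  exact: eqmodX_geom.
by rewrite /prod_coef (fps_prod_coef _ (leqnn h)); apply: (graded_inv gD D0 FD).
Qed.

Theorem mainTheorem7 :
  exists n : nat -> nat -> laurent,
    (forall h g, lsym (n h g)) /\
    (forall h : nat,
       prod_coef h =
       \sum_(g < h.+1)
          leval (n h g) tau * (qv^-1 + (tau + tau^-1) + qv) ^+ g).
Proof.
have ex_P h : exists P : {poly {poly rat}}, (size P <= h.+1)%N && (prod_coef h == yeval P).
  by have [P sP eP] := prod_coef_ydeg_le h; exists P; rewrite sP eP eqxx.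
exists (fun h g => laurent_of_br2 (xchoose (ex_P h))`_g); split.
  by move=> h g; apply: lsym_laurent_of_br2.
move=> h; have /andP [sP /eqP {1}->] := xchooseP (ex_P h).
rewrite yevalE (horner_coef_wide _ (leq_trans (size_poly _ _) sP)).
by apply: eq_bigr => g _; rewrite coef_map -sym_eval_laurent.
Qed.
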